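(* Consider the $l$-th cycle of RPF-SFISTA and assume $\mu=\mu_{l-1}\in(0,\bar\mu]$. Let $\gamma_j(x):=\phi(y_j)+2[\ell_f(y_j;\tilde x_{j-1})-f(y_j)]+\langle s_j,x-y_j\rangle+\frac{\mu}{4}\|x-y_j\|^2$. Then for every iteration index $j\ge1$ generated in this cycle, $\gamma_j(x)\le\phi(x)$ for all $x\in\mathbb R^n$.
   Context: Setup. Let $f:\mathbb R^n\to\mathbb R$ be convex and differentiable with $\|\nabla f(z')-\nabla f(z)\|\le\bar L\|z'-z\|$ for all $z,z'\in\mathbb R^n$ (some $\bar L\ge0$). Let $h:\mathbb R^n\to(-\infty,\infty]$ be proper, lower semicontinuous and convex with domain $\mathcal H$. Let $\phi:=f+h$ be $\bar\mu$-strongly convex for some $\bar\mu>0$ (the entire sum, not necessarily $f$ or $h$ individually). Write $\ell_f(u;x):=f(x)+\langle\nabla f(x),u-x\rangle$. RPF-SFISTA. Parameters $\chi\in(0,1)$, $\beta>1$; inputs $\mu_0>0$, $\bar M_0>0$, $z_0\in\mathcal H$, $\hat\epsilon>0$. The method runs in cycles $l=1,2,\dots$. At the start of cycle $l$: choose $\underline M_l\in[\max\{\bar M_{l-1}/4,\bar M_0\},\bar M_{l-1}]$ (so $\underline M_1=\bar M_0$), set $\mu:=\mu_{l-1}$, $x_0:=z_{l-1}$, $\xi_0:=y_0:=x_0$, $A_0:=0$, $\tau_0:=1$, $L_0:=\underline M_l$. Then for $j=1,2,\dots$: (i) set $L_j:=L_{j-1}$; (ii) compute $a_{j-1}=\frac{\tau_{j-1}+\sqrt{\tau_{j-1}^2+4\tau_{j-1}A_{j-1}L_j}}{2L_j}$,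 $\tilde x_{j-1}=\frac{A_{j-1}y_{j-1}+a_{j-1}x_{j-1}}{A_{j-1}+a_{j-1}}$, $y_j=\arg\min_{u}\{\ell_f(u;\tilde x_{j-1})+h(u)+\frac{L_j}{2}\|u-\tilde x_{j-1}\|^2\}$; if $f(y_j)\le\ell_f(y_j;\tilde x_{j-1})+\frac{(1-\chi)L_j}{4}\|y_j-\tilde x_{j-1}\|^2$ go to (iii), otherwise replace $L_j$ by $\beta L_j$ and repeat (ii); (iii) set $\xi_j:=y_j$ if $\phi(y_j)\le\phi(\xi_{j-1})$ and $\xi_j:=\xi_{j-1}$ otherwise; $A_j:=A_{j-1}+a_{j-1}$; $\tau_j:=\tau_{j-1}+a_{j-1}\mu/2$; $s_j:=L_j(\tilde x_{j-1}-y_j)$; $x_j:=\tau_j^{-1}[\mu a_{j-1}y_j/2+\tau_{j-1}x_{j-1}-a_{j-1}s_j]$; $v_j:=\nabla f(y_j)-\nabla f(\tilde x_{j-1})+s_j$; (iv) if $\|\xi_j-x_0\|^2<\chi A_jL_j\|y_j-\tilde x_{j-1}\|^2$, the cycle ends with a restart: set $z_l:=\xi_j$, $\bar M_l:=L_j$, $\mu_l:=\mu/2$ and start cycle $l+1$; (v) otherwise, if $\|v_j\|\le\hat\epsilon$, stop and output $(y,v,\xi,L):=(y_j,v_j,\xi_j,L_j)$; else go to iteration $j+1$. In these formulas $L_j$, $a_{j-1}$, $\tilde x_{j-1}$, $y_j$ denote the final (accepted) values after the line search in (ii). *)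

From HB Require Import structures.
From mathcomp Require Import all_boot all_order all_algebra.
From mathcomp Require Import all_classical all_reals all_analysis.
Set Implicit Arguments. Unset Strict Implicit. Unset Printing Implicit Defensive.
Import Order.TTheory GRing.Theory Num.Theory.
Import numFieldNormedType.Exports.
Local Open Scope ring_scope.

Section Defs.
Context {R : realType} {n : nat}.
Notation vec := 'rV[R]_n.

Definition dotv (u w : vec) : R := \sum_(i < n) u 0 i * w 0 i.
Definition sqnorm (u : vec) : R := dotv u u.
Definition enorm (u : vec) : R := Num.sqrt (sqnorm u).

Definition lin_f (f : vec -> R) (gf : vec -> vec) (u x : vec) : R :=
  f x + dotv (gf x) (u - x).

Definition convex_fun (f : vec -> R) : Prop :=
  forall (x y : vec) (t : R), 0 <= t <= 1 ->
    f (t *: x + (1 - t) *: y) <= t * f x + (1 - t) * f y.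

Definition convex_efun (h : vec -> \bar R) : Prop :=
  forall (x y : vec) (t : R), 0 < t < 1 ->
    (h (t *: x + (1 - t) *: y)%R <= t%:E * h x + (1 - t)%:E * h y)%E.

Definition proper_efun (h : vec -> \bar R) : Prop :=
  (forall x, (-oo < h x)%E) /\ exists x, (h x < +oo)%E.

Definition strongly_convex_efun (mu : R) (g : vec -> \bar R) : Prop :=
  forall (x y : vec) (t : R), 0 < t < 1 ->
    (g (t *: x + (1 - t) *: y)%R <= t%:E * g x + (1 - t)%:E * g y
        - (mu / 2 * t * (1 - t) * sqnorm (x - y)%R)%:E)%E.

Definition phi_fun (f : vec -> R) (h : vec -> \bar R) (x : vec) : \bar R :=
  ((f x)%:E + h x)%E.

(* objective of the prox subproblem in step (ii) *)
Definition sub_obj (f : vec -> R) (gf : vec -> vec) (h : vec -> \bar R)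
    (L : R) (xt u : vec) : \bar R :=
  ((lin_f f gf u xt)%:E + h u + (L / 2 * sqnorm (u - xt)%R)%:E)%E.

Definition is_argmin (F : vec -> \bar R) (y : vec) : Prop :=
  forall u, (F y <= F u)%E.

(* a_{j-1} as a function of tau_{j-1}, A_{j-1}, L_j *)
Definition a_step (tau A L : R) : R :=
  (tau + Num.sqrt (tau ^+ 2 + 4 * tau * A * L)) / (2 * L).

Definition xt_step (A a : R) (yprev xprev : vec) : vec :=
  (A + a)^-1 *: (A *: yprev + a *: xprev).

Definition ls_accept (f : vec -> R) (gf : vec -> vec) (chi L : R) (xt y : vec) : Prop :=
  f y <= lin_f f gf y xt + (1 - chi) * L / 4 * sqnorm (y - xt).

(* One cycle of RPF-SFISTA, iterations 1..J all generated in this cycle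
   (iterations j < J neither restart nor stop).  Data of the cycle:
   mu = mu_{l-1}, x0 = z_{l-1}, Mbar0, Mprev = Mbar_{l-1}, Ml = underline M_l. *)
Definition rpf_cycle (f : vec -> R) (gf : vec -> vec) (h : vec -> \bar R)
  (chi beta mu epsh Mbar0 Mprev Ml : R) (x0 : vec) (J : nat)
  (L a A tau : nat -> R) (xt y x xi s v : nat -> vec) : Prop :=
  [/\ Num.max (Mprev / 4) Mbar0 <= Ml <= Mprev,
      [/\ [/\ x 0%N = x0, xi 0%N = x0 & y 0%N = x0], A 0%N = 0, tau 0%N = 1 & L 0%N = Ml],
      (forall j : nat, (1 <= j <= J)%N ->
        (* step (ii): line search L_j = beta^k L_{j-1}, k minimal accepted *)
        (exists k : nat,
          [/\ L j = beta ^+ k * L j.-1,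
              (forall k' : nat, (k' < k)%N ->
                 let L' := beta ^+ k' * L j.-1 in
                 let a' := a_step (tau j.-1) (A j.-1) L' in
                 let xt' := xt_step (A j.-1) a' (y j.-1) (x j.-1) in
                 forall y' : vec, is_argmin (sub_obj f gf h L' xt') y' ->
                   ~ ls_accept f gf chi L' xt' y'),
              a j.-1 = a_step (tau j.-1) (A j.-1) (L j) /\
              xt j.-1 = xt_step (A j.-1) (a j.-1) (y j.-1) (x j.-1),
              is_argmin (sub_obj f gf h (L j) (xt j.-1)) (y j) &
              ls_accept f gf chi (L j) (xt j.-1) (y j)]) /\
        [/\ xi j = (if (phi_fun f h (y j) <= phi_fun f h (xi j.-1))%E
                    then y j else xi j.-1),
            A j = A j.-1 + a j.-1 /\
            tau j = tau j.-1 + a j.-1 * mu / 2,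
            s j = L j *: (xt j.-1 - y j),
            x j = (tau j)^-1 *: (mu * a j.-1 / 2 *: y j + tau j.-1 *: x j.-1
                                  - a j.-1 *: s j) &
            v j = gf (y j) - gf (xt j.-1) + s j]) &
      (* steps (iv),(v): iterations j < J neither restart nor stop *)
      (forall j : nat, (1 <= j < J)%N ->
        ~ (sqnorm (xi j - x0) < chi * A j * L j * sqnorm (y j - xt j.-1))
        /\ ~ (enorm (v j) <= epsh))].

Definition gamma_fun (f : vec -> R) (h : vec -> \bar R) (gf : vec -> vec) (mu : R)
  (xtj1 yj sj : vec) (z : vec) : \bar R :=
  (phi_fun f h yj +
    (2 * (lin_f f gf yj xtj1 - f yj) + dotv sj (z - yj)
      + mu / 4 * sqnorm (z - yj))%:E)%E.

End Defs.

(* Let w be the midpoint of z and the prox point y = y_j.  Optimality of y in the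
   prox subproblem gives the subgradient inequality
     l_f(y; xt) + h(y) + <s_j, w - y> <= l_f(w; xt) + h(w) <= phi(w),
   the last step because the linearization of the convex f minorizes f.  Strong
   convexity of phi bounds phi(w) by (phi(z) + phi(y))/2 - mubar/8 |z - y|^2, and
   doubling the resulting inequality, with mu <= mubar, is gamma_j(z) <= phi(z). *)

From HB Require Import structures.
From mathcomp Require Import all_boot all_order all_algebra.
From mathcomp Require Import all_classical all_reals all_analysis.
From mathcomp Require Import ring lra.
Import Order.TTheory GRing.Theory Num.Theory.
Import numFieldNormedType.Exports.
Set Implicit Arguments. Unset Strict Implicit. Unset Printing Implicit Defensive.
Local Open Scope ring_scope.

Lemma ler_of_le_addM01 (R : realFieldType) (a b d : R) :
  (forall t, 0 < t < 1 -> a <= b + t * d) -> a <= b.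
Proof.
move=> le_ab; apply/ler_addgt0Pr => e e0.
pose t := Num.min (1 / 2) (e / (`|d| + 1)).
have d1 : 0 < `|d| + 1 by rewrite ltr_pwDr.
have t0 : 0 < t by rewrite lt_min divr_gt0 //= divr_gt0.
have t1 : t < 1 by rewrite gt_min; apply/orP; left; lra.
have tde : t * (`|d| + 1) <= e by rewrite -ler_pdivlMr // ge_min lexx orbT.
have := le_ab t (ltac:(apply/andP; split => //)).
have : t * d <= t * `|d| by rewrite ler_pM2l // ler_norm.
nra.
Qed.

Section Dotv.
Context {R : realType} {n : nat}.
Implicit Types u w c : 'rV[R]_n.

Lemma dotvC u w : dotv u w = dotv w u.
Proof. by apply: eq_bigr => i _; rewrite mulrC. Qed.

Lemma dotvDl u w c : dotv (u + w) c = dotv u c + dotv w c.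
Proof. by rewrite /dotv -big_split; apply: eq_bigr => i _; rewrite mxE mulrDl. Qed.

Lemma dotvZl (k : R) u c : dotv (k *: u) c = k * dotv u c.
Proof. by rewrite /dotv mulr_sumr; apply: eq_bigr => i _; rewrite mxE mulrA. Qed.

Lemma dotvDr u w c : dotv c (u + w) = dotv c u + dotv c w.
Proof. by rewrite dotvC dotvDl !(dotvC c). Qed.

Lemma dotvZr (k : R) u c : dotv c (k *: u) = k * dotv c u.
Proof. by rewrite dotvC dotvZl dotvC. Qed.

Lemma dotvNl u c : dotv (- u) c = - dotv u c.
Proof. by rewrite -scaleN1r dotvZl mulN1r. Qed.

Lemma dotvBr u w c : dotv c (u - w) = dotv c u - dotv c w.
Proof. by rewrite dotvDr [dotv c (- w)]dotvC dotvNl [dotv w c]dotvC. Qed.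

Lemma sqnormD u w : sqnorm (u + w) = sqnorm u + 2 * dotv u w + sqnorm w.
Proof. by rewrite /sqnorm dotvDl !dotvDr (dotvC w u); ring. Qed.

Lemma sqnormZ (k : R) u : sqnorm (k *: u) = k ^+ 2 * sqnorm u.
Proof. by rewrite /sqnorm dotvZl dotvZr mulrA expr2. Qed.

Lemma sqnorm_ge0 u : 0 <= sqnorm u.
Proof. by apply: sumr_ge0 => i _; rewrite -expr2 sqr_ge0. Qed.

End Dotv.

Lemma strongly_convex_efun_le (R : realType) (n : nat) (g : 'rV[R]_n -> \bar R)
  (mu mu' : R) :
  mu <= mu' -> strongly_convex_efun mu' g -> strongly_convex_efun mu g.
Proof.
move=> le_mu gconv x y t t01; apply: (le_trans (gconv x y t t01)).
apply: leeB => //; rewrite lee_fin; case/andP: t01 => t0 t1.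
by apply: ler_wpM2r; [exact: sqnorm_ge0 | rewrite -!mulrA ler_wpM2r //; nra].
Qed.

Section ProxStep.
Context {R : realType} {n : nat}.
Variables (f : 'rV[R]_n -> R) (gf : 'rV[R]_n -> 'rV[R]_n) (h : 'rV[R]_n -> \bar R).
Hypothesis hproper : proper_efun h.

Lemma lin_fB u w xt :
  lin_f f gf u xt - lin_f f gf w xt = dotv (gf xt) (u - w).
Proof. by rewrite /lin_f !dotvBr; ring. Qed.

Lemma lin_f_le_convex (fconv : convex_fun f) (fdiff : forall z, differentiable f z)
  (grad : forall z w, 'd f z w = dotv (gf z) w) a z :
  lin_f f gf z a <= f z.
Proof.
rewrite /lin_f -grad -deriveE // -lerBrDl.
set q := fun t : R => t^-1 *: ((f \o shift a) (t *: (z - a)) - f a).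
have /cvg_ex[l ql] : derivable f a (z - a) by exact: diff_derivable.
have -> : 'D_(z - a) f a = lim (q @ 0^'+)%classic.
  by rewrite /derive cvg_at_rightE //; apply/cvg_ex; exists l.
apply: limr_le.
  apply/cvg_ex; exists l => A /ql [e /= e0 eA]; exists e => // t et t0.
  by apply: eA => //; rewrite gt_eqF.
near=> t.
have t0 : 0 < t by near: t; exact: nbhs_right_gt.
have t1 : t < 1 by near: t; exact: nbhs_right_lt.
have := fconv z a t (ltac:(apply/andP; split; lra)) => fc.
rewrite /q /= [_ *: _]/(_ * _) ler_pdivrMl //.
have -> : t *: (z - a) + a = t *: z + (1 - t) *: a.
  by rewrite scalerBr scalerBl scale1r addrCA addrC.
lra.
Unshelve. all: by end_near.
Qed.

Lemma fin_of_lt_pinfty x : (h x < +oo)%E -> exists r, h x = r%:E.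
Proof.
case: hproper => ninf _; have := ninf x.
by case: (h x) => [r | |] // _ _; exists r.
Qed.

Lemma argmin_sub_obj_fin L xt y :
  is_argmin (sub_obj f gf h L xt) y -> exists r, h y = r%:E.
Proof.
move=> ymin; have [x0 /fin_of_lt_pinfty [r0 hx0]] := hproper.2.
apply: fin_of_lt_pinfty; rewrite ltNge leye_eq; apply/negP => /eqP hy.
by have := ymin x0; rewrite /sub_obj hy hx0.
Qed.

(* [L *: (xt - y)] is a subgradient of [lin_f f gf _ xt + h] at the prox point [y]:
   compare [y] with [y + t *: (z - y)] and let [t] tend to [0]. *)
Lemma argmin_sub_obj_subgrad (hconv : convex_efun h) L xt y z hy hz :
  is_argmin (sub_obj f gf h L xt) y -> h y = hy%:E -> h z = hz%:E ->
  lin_f f gf y xt + hy + dotv (L *: (xt - y)) (z - y) <= lin_f f gf z xt + hz.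
Proof.
move=> ymin hyE hzE.
apply: (@ler_of_le_addM01 _ _ _ (L / 2 * sqnorm (z - y))) => t /andP[t0 t1].
set u := t *: z + (1 - t) *: y.
have uE : u = y + t *: (z - y).
  by apply/rowP => i; rewrite !mxE; ring.
have := hconv z y t (ltac:(apply/andP; split => //)).
rewrite -/u hyE hzE -!EFinM -EFinD => hu_le.
have [hu huE] : exists r, h u = r%:E.
  by apply: fin_of_lt_pinfty; exact: le_lt_trans hu_le (ltey _).
rewrite huE lee_fin in hu_le.
have := ymin u; rewrite /sub_obj hyE huE -!EFinD lee_fin.
have -> : u - xt = (y - xt) + t *: (z - y) by rewrite uE addrAC.
rewrite (sqnormD (y - xt)) sqnormZ dotvZr -(subrK (lin_f f gf y xt) (lin_f f gf u xt)) lin_fB.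
rewrite -(subrK (lin_f f gf y xt) (lin_f f gf z xt)) lin_fB.
have -> : u - y = t *: (z - y) by rewrite uE addrAC subrr add0r.
have -> : xt - y = - (y - xt) by rewrite opprB.
rewrite dotvZr dotvZl dotvNl => opt.
rewrite -subr_ge0 -(pmulr_rge0 _ t0); nra.
Qed.

Lemma gamma_fun_le_phi_fun (fconv : convex_fun f)
  (fdiff : forall z, differentiable f z) (grad : forall z w, 'd f z w = dotv (gf z) w)
  (hconv : convex_efun h) mu (phiconv : strongly_convex_efun mu (phi_fun f h))
  L xt y z :
  is_argmin (sub_obj f gf h L xt) y ->
  (gamma_fun f h gf mu xt y (L *: (xt - y)) z <= phi_fun f h z)%E.
Proof.
move=> ymin; have [hy hyE] := argmin_sub_obj_fin ymin.
have [[hz hzE] | hzE] : (exists r, h z = r%:E) \/ h z = +oo%E.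
- by case: (h z) (hproper.1 z) => [r | |] // _; [left; exists r | right].
- set w := 2^-1 *: z + (1 - 2^-1) *: y.
  have := phiconv z y 2^-1 (ltac:(apply/andP; split; lra)).
  rewrite -/w /phi_fun hzE hyE -!EFinD => phiw_le.
  have [hw hwE] : exists r, h w = r%:E.
    apply: fin_of_lt_pinfty; rewrite ltNge leye_eq; apply/negP => /eqP hwE.
    by rewrite hwE addey in phiw_le.
  rewrite hwE -EFinD lee_fin in phiw_le.
  have := argmin_sub_obj_subgrad hconv ymin hyE hwE.
  have -> : w - y = 2^-1 *: (z - y) by apply/rowP => i; rewrite !mxE; field.
  rewrite dotvZr => subgrad.
  have := lin_f_le_convex fconv fdiff grad xt w.
  rewrite /gamma_fun /phi_fun hyE -!EFinD lee_fin.
  lra.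
- by rewrite /phi_fun hzE addey ?leey.
Qed.

End ProxStep.

Theorem lemmaA5 (R : realType) (n : nat)
  (f : 'rV[R]_n -> R) (gf : 'rV[R]_n -> 'rV[R]_n) (h : 'rV[R]_n -> \bar R)
  (Lbar mubar : R)
  (Hfconv : convex_fun f)
  (Hfdiff : forall z, differentiable f z)
  (Hgrad : forall z w, 'd f z w = dotv (gf z) w)
  (HLbar : 0 <= Lbar)
  (Hlip : forall z z', enorm (gf z' - gf z) <= Lbar * enorm (z' - z))
  (Hhprop : proper_efun h) (Hhlsc : lower_semicontinuous h) (Hhconv : convex_efun h)
  (Hmubar : 0 < mubar) (Hphi : strongly_convex_efun mubar (phi_fun f h))
  (chi beta mu epsh Mbar0 Mprev Ml : R) (x0 : 'rV[R]_n)
  (Hchi : 0 < chi < 1) (Hbeta : 1 < beta) (Heps : 0 < epsh) (HM0 : 0 < Mbar0)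
  (Hx0 : (h x0 < +oo)%E)
  (Hmu : 0 < mu <= mubar)
  (J : nat) (L a A tau : nat -> R) (xt y x xi s v : nat -> 'rV[R]_n)
  (Hcyc : rpf_cycle f gf h chi beta mu epsh Mbar0 Mprev Ml x0 J L a A tau xt y x xi s v) :
  forall j : nat, (1 <= j <= J)%N ->
    forall z : 'rV[R]_n, (gamma_fun f h gf mu (xt j.-1) (y j) (s j) z <= phi_fun f h z)%E.
Proof.
move=> j Hj z.
case: Hcyc => _ _ /(_ j Hj) [[_ [_ _ _ ymin _]] [_ _ -> _ _]] _.
case/andP: Hmu => _ le_mu.
exact: (gamma_fun_le_phi_fun Hhprop Hfconv Hfdiff Hgrad Hhconv
  (strongly_convex_efun_le le_mu Hphi) z ymin).
Qed.
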